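(* Let $\sigma:\mathbb R\to\mathbb R$ be a differentiable activation and let $f_{\theta_{\mathrm{wide}}}$ be a fully-connected network model with $M_{\mathrm{wide}}$ parameters. Then every function $f^*$ in the function space of any narrower fully-connected network satisfies $O_{f_{\theta_{\mathrm{wide}}}}(f^* )<M_{\mathrm{wide}}$; that is, $f^*$ has $n$-sample LLR-guarantee for the model $f_{\theta_{\mathrm{wide}}}$ for some $n<M_{\mathrm{wide}}$.
   Context: A fully-connected network $\mathrm{NN}(\{m_l\}_{l=0}^L)$, $L\geq2$, with $m_0=d$ and $m_L=1$ has parameters $\theta=(W^{[1]},b^{[1]},\dots,W^{[L]},b^{[L]})$ with $W^{[l]}\in\mathbb R^{m_l\times m_{l-1}}$, $b^{[l]}\in\mathbb R^{m_l}$ (a vector in $\mathbb R^M$, $M=\sum_{l=0}^{L-1}(m_l+1)m_{l+1}$), and output $f_\theta(x)=W^{[L]}f^{[L-1]}(x)+b^{[L]}$, where $f^{[0]}(x)=x$ and $f^{[l]}(x)=\sigma(W^{[l]}f^{[l-1]}(x)+b^{[l]})$ for $l\in[L-1]$. A network $\mathrm{NN}(\{m_l\})$ is narrower than $\mathrm{NN}'(\{m'_l\})$ (same $L$) if $m'_0=m_0$, $m'_L=m_L$, $m'_l\geq m_l$ for all $l\in[L-1]$, and $\sum_{l=1}^{L-1}(m'_l-m_l)>0$. The loss $\ell:\mathbb R\times\mathbb R\to[0,\infty)$ is continuously differentiable with $\ell(u,v)=0$ iff $u=v$. For a model $h_\theta$, $\theta\in\mathbb R^M$, and $f^*$ in its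 function space: $\mathcal M_{f^*}=\{\theta:h_\theta=f^*\}$; a dataset of size $n$ from $f^*$ is $\{(x_i,f^*(x_i))\}_{i=1}^n$ with empirical loss $\frac1n\sum_i\ell(u(x_i),f^*(x_i))$ (identically $0$ if $n=0$); the tangent hyperplane at $\theta'$ is $\{h(\cdot;\theta')+a^\top\nabla_\theta h(\cdot;\theta'):a\in\mathbb R^M\}$; $f^*$ has $n$-sample LLR-guarantee if for some dataset of size $n$ from $f^*$ and some $\theta'\in\mathcal M_{f^*}$ the set of minimizers of the empirical loss over the tangent hyperplane at $\theta'$ is exactly $\{f^*\}$; $O_h(f^* )$ is the smallest such $n\geq0$. *)

From HB Require Import structures.
From mathcomp Require Import all_boot all_order all_algebra.
From mathcomp Require Import all_classical all_reals all_analysis.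
Set Implicit Arguments. Unset Strict Implicit. Unset Printing Implicit Defensive.
Import Order.TTheory GRing.Theory Num.Theory.
Import numFieldNormedType.Exports.
Local Open Scope classical_set_scope.
Local Open Scope ring_scope.

(* Architecture.  A fully-connected network NN({m_l}_{l=0}^L) with m_0 = d *)
(* and m_L = 1 is described by d and the list hs = [m_1; ...; m_{L-1}] of  *)
(* hidden widths, so L = size hs + 1 and L >= 2 iff hs is nonempty.        *)

Definition width (d : nat) (hs : seq nat) (l : nat) : nat :=
  nth 0%N (d :: rcons hs 1%N) l.

Definition depth (hs : seq nat) : nat := (size hs).+1.

(* a crude bound strictly larger than every m_l and every m_l + 1 index *)
Definition pbound (d : nat) (hs : seq nat) : nat := (d + sumn hs).+2.

(* Parameter coordinates: (l, i, j) stands for W^{[l+1]}_{i j} when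
   j < m_l, and for b^{[l+1]}_i when j = m_l;  here l < L, i < m_{l+1}. *)
Definition valid_idx (d : nat) (hs : seq nat)
  (p : 'I_(depth hs) * 'I_(pbound d hs) * 'I_(pbound d hs)) : bool :=
  let: (l, i, j) := p in
  ((i < width d hs l.+1) && (j <= width d hs l))%N.

Definition PIdx (d : nat) (hs : seq nat) :=
  {p : 'I_(depth hs) * 'I_(pbound d hs) * 'I_(pbound d hs) | @valid_idx d hs p}.

(* The number of parameters M = #|PIdx d hs| = sum_l (m_l + 1) m_{l+1}. *)
Definition nparams (d : nat) (hs : seq nat) : nat := #|{: PIdx d hs}|.

Definition idx_nat (d : nat) (hs : seq nat) (p : PIdx d hs) : nat * nat * nat :=
  let: (l, i, j) := val p in (val l, val i, val j).

Section NN.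
Variable R : realType.

(* theta_(l,i,j) (0 outside the valid range; never used there) *)
Definition getp (d : nat) (hs : seq nat) (th : PIdx d hs -> R) (l i j : nat) : R :=
  if [pick p : PIdx d hs | idx_nat p == (l, i, j)] is Some p then th p else 0.

Definition preact (d : nat) (hs : seq nat) (th : PIdx d hs -> R) (l : nat)
  (v : nat -> R) (i : nat) : R :=
  \sum_(j < width d hs l) getp th l i j * v j + getp th l i (width d hs l).

Fixpoint hidden (sigma : R -> R) (d : nat) (hs : seq nat) (th : PIdx d hs -> R)
  (x : 'rV[R]_d) (k : nat) : nat -> R :=
  match k with
  | 0 => fun i => if (insub i : option 'I_d) is Some j then x ord0 j else 0
  | k'.+1 => fun i => sigma (preact th k' (hidden sigma th x k') i)
  end.

Definition nn_out (sigma : R -> R) (d : nat) (hs : seq nat) (th : PIdx d hs -> R)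
  (x : 'rV[R]_d) : R :=
  preact th (depth hs).-1 (hidden sigma th x (depth hs).-1) 0.

Definition nn_fspace (sigma : R -> R) (d : nat) (hs : seq nat) : set ('rV[R]_d -> R) :=
  [set f | exists th : PIdx d hs -> R, f = nn_out sigma th].

End NN.
Arguments nn_fspace [R] sigma d hs.

(* NN(d,hs) is narrower than NN(d,hs') (same d, same L, output width 1) *)
Definition narrower (hs hs' : seq nat) : Prop :=
  size hs = size hs' /\
  (forall l, (l < size hs)%N -> (nth 0%N hs l <= nth 0%N hs' l)%N) /\
  (0 < \sum_(l < size hs) (nth 0%N hs' l - nth 0%N hs l))%N.

Section LLR.
Variable R : realType.

Definition upd (T : eqType) (th : T -> R) (p : T) (t : R) : T -> R :=
  fun q => if q == p then th q + t else th q.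

Definition partial (T : eqType) (F : (T -> R) -> R) (th : T -> R) (p : T) : R :=
  derive1 (fun t => F (upd th p t)) 0.

Definition tangent_plane (T : finType) (U : Type) (h : (T -> R) -> U -> R)
  (th' : T -> R) : set (U -> R) :=
  [set u | exists a : T -> R,
     u = fun x => h th' x + \sum_(p : T) a p * partial (fun th => h th x) th' p].

Definition emp_loss (ell : R -> R -> R) (U : Type) (n : nat) (X : 'I_n -> U)
  (fs : U -> R) (u : U -> R) : R :=
  if n == 0%N then 0 else n%:R^-1 * \sum_(i < n) ell (u (X i)) (fs (X i)).

Definition LLR_guarantee (ell : R -> R -> R) (T : finType) (U : Type)
  (h : (T -> R) -> U -> R) (fs : U -> R) (n : nat) : Prop :=
  exists (X : 'I_n -> U) (th' : T -> R),
    h th' = fs /\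
    [set u | tangent_plane h th' u /\
             forall v, tangent_plane h th' v ->
               emp_loss ell X fs u <= emp_loss ell X fs v] = [set fs].

Definition C1_fun2 (ell : R -> R -> R) : Prop :=
  let f := fun z : R * R => ell z.1 z.2 in
  (forall z, differentiable f z) /\
  (forall v : R * R, continuous (fun z => 'd f z v)).

Definition admissible_loss (ell : R -> R -> R) : Prop :=
  (forall u v, 0 <= ell u v) /\ (forall u v, ell u v = 0 <-> u = v) /\ C1_fun2 ell.

End LLR.

From HB Require Import structures.
From mathcomp Require Import all_boot all_order all_algebra.
From mathcomp Require Import all_classical all_reals all_analysis.
From mathcomp Require Import zify.
Set Implicit Arguments. Unset Strict Implicit. Unset Printing Implicit Defensive.
Import Order.TTheory GRing.Theory Num.Theory.
Import numFieldNormedType.Exports.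
Local Open Scope classical_set_scope.
Local Open Scope ring_scope.

(* A hidden neuron that exists only in the wide network can be given the
   parameters of the narrow network on the common neurons and zero outgoing
   weights; then the network computes f* whatever the incoming weights of that
   extra neuron are, so one coordinate of the gradient vanishes identically.
   The tangent hyperplane is therefore an affine space of dimension < M, and
   fewer than M sample points determine its elements.  Since f* lies on it with
   zero empirical loss, every minimiser has zero loss, hence agrees with f* at
   those points, hence equals f*. *)

Section DeterminingPoints.
Variable F : fieldType.

Lemma sum_scale_sub (T : eqType) (U : Type) (g : T -> U -> F) (s : seq T)
    (a b : T -> F) (c : F) x :
  \sum_(p <- s) (a p - c * b p) * g p x =
  \sum_(p <- s) a p * g p x - c * \sum_(p <- s) b p * g p x.
Proof.
by rewrite mulr_sumr -sumrB; apply: eq_bigr => p _; rewrite mulrBl mulrA.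
Qed.

(* Induction on s: a new function either is already determined on the old
   points, or some combination vanishing there is nonzero at a point xs, and
   adding xs kills the new direction. *)
Lemma exists_determining_points (T : eqType) (U : Type) (g : T -> U -> F)
    (s : seq T) :
  exists n, (n <= size s)%N /\ exists X : 'I_n -> U, forall a : T -> F,
    (forall i, \sum_(p <- s) a p * g p (X i) = 0) ->
    forall x, \sum_(p <- s) a p * g p x = 0.
Proof.
elim: s => [|q s [n [le_n_s [X HX]]]].
  have X0 : 'I_0 -> U by case=> m; rewrite ltn0.
  by exists 0%N; split => //; exists X0 => a _ x; rewrite big_nil.
pose G (a : T -> F) x := \sum_(p <- q :: s) a p * g p x.
have [[a0 [a0X [xs a0xs]]]|] :=
  pselect (exists a, (forall i, G a (X i) = 0) /\ exists x, G a x != 0); last first.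
  move=> none; exists n; split; first exact: leqW le_n_s.
  exists X => a aX x; apply/eqP/contraT => Gax; exfalso.
  by apply: none; exists a; split => //; exists x.
exists n.+1; split; first by rewrite ltnS.
pose X' (i : 'I_n.+1) := if unlift ord_max i is Some j then X j else xs.
exists X' => a aX' x.
have aX j : G a (X j) = 0 by have := aX' (lift ord_max j); rewrite /X' liftK.
have axs : G a xs = 0 by have := aX' ord_max; rewrite /X' unlift_none.
have a0q : a0 q != 0.
  apply: contra a0xs => /eqP a0q; apply/eqP.
  rewrite /G big_cons a0q mul0r add0r; apply: HX => i.
  by have := a0X i; rewrite /G big_cons a0q mul0r add0r.
pose c := a q / a0 q.
pose b p := a p - c * a0 p.
have Gb y : G b y = G a y - c * G a0 y by rewrite /G sum_scale_sub.
have Gb0 y : G b y = 0.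
  have bq : b q = 0 by rewrite /b /c -mulrA mulVf // mulr1 subrr.
  have Gb_s z : G b z = \sum_(p <- s) b p * g p z.
    by rewrite /G big_cons bq mul0r add0r.
  by rewrite Gb_s; apply: HX => i; rewrite -Gb_s Gb a0X aX mulr0 subr0.
have c0 : c = 0.
  have /eqP := Gb0 xs; rewrite Gb axs sub0r oppr_eq0 mulf_eq0.
  by rewrite (negbTE a0xs) orbF => /eqP.
by have := Gb0 x; rewrite Gb c0 mul0r subr0.
Qed.

End DeterminingPoints.

Section LinearizedRegression.
Variable R : realType.

Lemma partial_eq0 (T : eqType) (G : (T -> R) -> R) th p :
  (forall t, G (upd th p t) = G th) -> partial G th p = 0.
Proof.
move=> Gupd; rewrite /partial.
have -> : (fun t => G (upd th p t)) = cst (G th) by apply: funext => t; rewrite Gupd.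
exact: derive1_cst.
Qed.

Lemma tangent_plane_determining_points (T : finType) (U : Type)
    (h : (T -> R) -> U -> R) th p0 :
  (forall x, partial (fun th => h th x) th p0 = 0) ->
  exists n, (n < #|T|)%N /\ exists X : 'I_n -> U, forall u,
    tangent_plane h th u -> (forall i, u (X i) = h th (X i)) -> u = h th.
Proof.
move=> grad_p0; pose g p x := partial (fun th => h th x) th p.
pose s := enum (predC1 p0).
have [n [le_n_s [X HX]]] := exists_determining_points g s.
have sum_s (a : T -> R) x : \sum_p a p * g p x = \sum_(p <- s) a p * g p x.
  by rewrite (bigD1 p0) //= /g grad_p0 mulr0 add0r /s big_enum.
exists n; split.
  apply: leq_ltn_trans le_n_s _; rewrite /s -cardE cardC1 ltn_predL.
  by apply/card_gt0P; exists p0.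
exists X => _ [a ->] uX; apply: funext => x.
rewrite /= sum_s (HX a) ?addr0 // => i.
by apply: (addrI (h th (X i))); rewrite -sum_s addr0 uX.
Qed.

Variable ell : R -> R -> R.
Hypothesis ell_ge0 : forall u v, 0 <= ell u v.
Hypothesis ell_eq0 : forall u v, ell u v = 0 <-> u = v.

Lemma emp_loss_ge0 (U : Type) n (X : 'I_n -> U) fs u : 0 <= emp_loss ell X fs u.
Proof.
rewrite /emp_loss; case: ifP => // _.
by rewrite mulr_ge0 ?invr_ge0 ?ler0n ?sumr_ge0.
Qed.

Lemma emp_loss_self (U : Type) n (X : 'I_n -> U) fs : emp_loss ell X fs fs = 0.
Proof.
rewrite /emp_loss; case: ifP => // _.
by rewrite big1 ?mulr0 // => i _; apply/ell_eq0.
Qed.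

Lemma emp_loss_eq0 (U : Type) n (X : 'I_n -> U) fs u :
  emp_loss ell X fs u = 0 -> forall i, u (X i) = fs (X i).
Proof.
rewrite /emp_loss; case: eqP => [n0 _ i|/eqP n0]; first by have := ltn_ord i; rewrite {2}n0.
move=> /eqP; rewrite mulf_eq0 invr_eq0 pnatr_eq0 (negbTE n0) /= => /eqP sum0 i.
by apply/ell_eq0; apply: (psumr_eq0P _ sum0).
Qed.

(* fs is in the tangent plane with loss 0, so a minimiser has loss 0 too. *)
Lemma LLR_guarantee_of_determining_points (T : finType) (U : Type)
    (h : (T -> R) -> U -> R) fs th n (X : 'I_n -> U) :
  h th = fs ->
  (forall u, tangent_plane h th u -> (forall i, u (X i) = fs (X i)) -> u = fs) ->
  LLR_guarantee ell h fs n.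
Proof.
move=> h_fs HX; have fs_tp : tangent_plane h th fs.
  exists (fun _ => 0); apply: funext => x.
  by rewrite h_fs big1 ?addr0 // => p _; rewrite mul0r.
exists X, th; split => //; apply/seteqP; split => u /=; last first.
  by move=> ->; split => // v _; rewrite emp_loss_self emp_loss_ge0.
move=> [u_tp u_min]; apply: HX => //; apply: emp_loss_eq0.
by apply/eqP; rewrite eq_le emp_loss_ge0 andbT -(emp_loss_self X fs) u_min.
Qed.

End LinearizedRegression.

Section Widths.
Variables (d : nat) (hs : seq nat).

Lemma nth_le_sumn (s : seq nat) k : (nth 0%N s k <= sumn s)%N.
Proof.
elim: s k => [|x s IH] [|k] //=; first exact: leq_addr.
exact: leq_trans (IH k) (leq_addl _ _).
Qed.

Lemma width_lt_pbound l : (width d hs l < pbound d hs)%N.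
Proof.
rewrite /width /pbound; case: l => [|l] /=; first lia.
rewrite nth_rcons; case: ifP => _; first by have := nth_le_sumn hs l; lia.
by case: ifP; lia.
Qed.

Lemma width_depth : width d hs (depth hs) = 1%N.
Proof. by rewrite /width /= nth_rcons ltnn eqxx. Qed.

Lemma lt_depth_of_width_gt0 l : (0 < width d hs l.+1)%N -> (l < depth hs)%N.
Proof.
rewrite /width /depth /= nth_rcons.
case: ifP => [lt_l _|_]; first exact: ltnW.
by case: ifP => [/eqP -> _|].
Qed.

Variable hs' : seq nat.
Hypothesis narrow : narrower hs hs'.

Lemma depth_narrower : depth hs' = depth hs.
Proof. by rewrite /depth; case: narrow => ->. Qed.

Lemma width_narrower l : (width d hs l <= width d hs' l)%N.
Proof.
case: narrow => [eq_size [le_nth _]]; rewrite /width; case: l => [|l] //=.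
by rewrite !nth_rcons -eq_size; case: ifP => [/le_nth|]; last case: ifP.
Qed.

Lemma exists_wider_layer : exists l, (width d hs l.+1 < width d hs' l.+1)%N.
Proof.
case: narrow => [eq_size [le_nth sum_gt0]].
have [l lt_l] : exists l : 'I_(size hs), (nth 0%N hs l < nth 0%N hs' l)%N.
  apply/existsP; apply: contraTT sum_gt0; rewrite negb_exists => /forallP ge_l.
  by rewrite -eqn0Ngt big1 // => l _; apply/eqP; rewrite subn_eq0 leqNgt ge_l.
by exists l; rewrite /width /= !nth_rcons -eq_size ltn_ord.
Qed.

End Widths.

Section ParamIndex.
Variables (R : realType) (d : nat) (hs : seq nat).

Definition is_param (l i j : nat) : bool :=
  [&& (l < depth hs)%N, (i < width d hs l.+1)%N & (j <= width d hs l)%N].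

Lemma is_param_idx (p : PIdx d hs) l i j : idx_nat p = (l, i, j) -> is_param l i j.
Proof.
case: p => [[[l' i'] j'] /= /andP [lt_i le_j]] [<- <- <-].
by rewrite /is_param ltn_ord lt_i le_j.
Qed.

Lemma exists_idx l i j : is_param l i j -> exists p : PIdx d hs, idx_nat p = (l, i, j).
Proof.
case/and3P => lt_l lt_i le_j.
have lt_i' : (i < pbound d hs)%N by apply: ltn_trans lt_i (width_lt_pbound _ _ _).
have lt_j' : (j < pbound d hs)%N by apply: leq_ltn_trans le_j (width_lt_pbound _ _ _).
have valid : valid_idx (Ordinal lt_l, Ordinal lt_i', Ordinal lt_j') by rewrite /= lt_i le_j.
by exists (exist (@valid_idx d hs) _ valid).
Qed.

Lemma getp_idx (F : nat * nat * nat -> R) l i j :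
  getp (fun p : PIdx d hs => F (idx_nat p)) l i j =
  if is_param l i j then F (l, i, j) else 0.
Proof.
rewrite /getp; case: pickP => [p /eqP idx_p|none].
  by rewrite (is_param_idx idx_p) idx_p.
case: ifP => // /exists_idx [p idx_p].
by have := none p; rewrite idx_p eqxx.
Qed.

Lemma getp_upd (th : PIdx d hs -> R) p0 t l i j :
  (l, i, j) != idx_nat p0 -> getp (upd th p0 t) l i j = getp th l i j.
Proof.
move=> ne_p0; rewrite /getp; case: pickP => // p /eqP idx_p.
by rewrite /upd; case: eqP => // eq_p; rewrite -idx_p eq_p eqxx in ne_p0.
Qed.

End ParamIndex.

Section Embedding.
Variables (R : realType) (sigma : R -> R) (d : nat) (hs hs' : seq nat).
Hypothesis narrow : narrower hs hs'.
Variable th : PIdx d hs -> R.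

(* thW restricted to the neurons of NN(d, hs) is th, and the extra neurons of
   NN(d, hs') feed nothing into them. *)
Definition embeds (thW : PIdx d hs' -> R) : Prop :=
  forall l i, (i < width d hs l.+1)%N ->
  (forall j, (j < width d hs' l)%N ->
     getp thW l i j = if (j < width d hs l)%N then getp th l i j else 0) /\
  getp thW l i (width d hs' l) = getp th l i (width d hs l).

Section Embeds.
Variable thW : PIdx d hs' -> R.
Hypothesis thW_embeds : embeds thW.

Lemma preact_embeds l vW v i : (i < width d hs l.+1)%N ->
  (forall j, (j < width d hs l)%N -> vW j = v j) ->
  preact thW l vW i = preact th l v i.
Proof.
move=> lt_i eq_v; have [weight bias] := thW_embeds lt_i.
rewrite /preact bias; congr (_ + _).
rewrite (big_ord_widen _ (fun j => getp th l i j * v j) (width_narrower d narrow l)).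
rewrite [RHS]big_mkcond; apply: eq_bigr => j _ /=.
by rewrite weight //; case: ifP => [/eq_v ->|]; rewrite ?mul0r.
Qed.

Lemma hidden_embeds x k i : (i < width d hs k)%N ->
  hidden sigma thW x k i = hidden sigma th x k i.
Proof.
elim: k i => [|k IH] i lt_i //=.
by congr sigma; apply: preact_embeds => // j /IH.
Qed.

Lemma nn_out_embeds : nn_out sigma thW = nn_out sigma th.
Proof.
apply: funext => x; rewrite /nn_out (depth_narrower narrow) /=.
apply: preact_embeds; first by rewrite width_depth.
by move=> j /hidden_embeds.
Qed.

End Embeds.

Definition pad_param (lij : nat * nat * nat) : R :=
  let: (l, i, j) := lij in
  if j == width d hs' l then getp th l i (width d hs l)
  else if (j < width d hs l)%N then getp th l i j else 0.

Definition pad_params (p : PIdx d hs') : R := pad_param (idx_nat p).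

Lemma pad_params_embeds : embeds pad_params.
Proof.
move=> l i lt_i; have lt_i' := leq_trans lt_i (width_narrower d narrow l.+1).
have lt_l : (l < depth hs')%N by exact: lt_depth_of_width_gt0 (leq_ltn_trans (leq0n i) lt_i').
split=> [j lt_j|]; rewrite getp_idx /is_param lt_l lt_i' /=.
  by rewrite ltnW // ltn_eqF.
by rewrite leqnn eqxx.
Qed.

Lemma embeds_upd thW p0 t : embeds thW ->
  (forall l i j, (i < width d hs l.+1)%N -> (l, i, j) != idx_nat p0) ->
  embeds (upd thW p0 t).
Proof.
move=> thW_embeds ne_p0 l i lt_i; have [weight bias] := thW_embeds l i lt_i.
by split=> [j lt_j|]; rewrite getp_upd ?(ne_p0 _ _ _ lt_i) // weight.
Qed.

(* The incoming weight from input 0 to a neuron missing from NN(d, hs). *)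
Lemma exists_inert_param : exists (thW : PIdx d hs' -> R) (p0 : PIdx d hs'),
  nn_out sigma thW = nn_out sigma th /\
  forall t, nn_out sigma (upd thW p0 t) = nn_out sigma th.
Proof.
have [l lt_w] := exists_wider_layer d narrow.
have [p0 idx_p0] : exists p0 : PIdx d hs', idx_nat p0 = (l, width d hs l.+1, 0%N).
  by apply: exists_idx; rewrite /is_param lt_w (lt_depth_of_width_gt0 (leq_ltn_trans (leq0n _) lt_w)).
exists pad_params, p0; split; first exact: nn_out_embeds pad_params_embeds.
move=> t; apply: nn_out_embeds; apply: embeds_upd pad_params_embeds _.
move=> l' i j lt_i; rewrite idx_p0; apply/eqP => -[eq_l eq_i _].
by move: lt_i; rewrite eq_l eq_i ltnn.
Qed.

End Embedding.

Theorem mainTheorem12 (R : realType) (sigma : R -> R) (ell : R -> R -> R)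
  (d : nat) (hs_wide : seq nat) :
  (forall x : R, derivable sigma x 1) ->
  admissible_loss ell ->
  (0 < size hs_wide)%N ->
  forall hs : seq nat, narrower hs hs_wide ->
  forall fs : 'rV[R]_d -> R, nn_fspace sigma d hs fs ->
  exists n : nat, (n < nparams d hs_wide)%N /\
    LLR_guarantee ell (fun th : PIdx d hs_wide -> R => nn_out sigma th) fs n.
Proof.
move=> _ [ell_ge0 [ell_eq0 _]] _ hs narrow _ [th ->].
have [thW [p0 [thW_th inert_p0]]] := exists_inert_param sigma narrow th.
have grad_p0 x : partial (fun th => nn_out sigma th x) thW p0 = 0.
  by apply: partial_eq0 => t; rewrite inert_p0 thW_th.
have [n [lt_n [X determined]]] := tangent_plane_determining_points grad_p0.
exists n; split; first exact: lt_n.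
apply: (LLR_guarantee_of_determining_points ell_ge0 ell_eq0 thW_th) => u u_tp uX.
by rewrite -thW_th; apply: determined; rewrite // thW_th.
Qed.
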